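(* For all $b,b'\in\overline{\mathbb{Q}}\setminus\{0,1\}$ and any choices of nonzero logarithms $\ln b,\ln b'$ used to define $b^x$ and $b'^x$, one has $EL^{(b)}=EL^{(b')}$.
   Context: For $b\in\mathbb{C}\setminus\{0,1\}$ fix a value $\ln b$ (nonzero) of the logarithm and define $b^x:=e^{x\ln b}$. For $S\subseteq\mathbb{C}$ let $b^{S}=\{b^x:x\in S\}$ and $\mathrm{Log}_b(S)=\{w: b^w\in S\}$. $\overline{F}$ is the algebraic closure in $\mathbb{C}$ of a field $F$; $\overline{\mathbb{Q}}$ is the field of algebraic numbers. Define $EL_0:=\mathbb{Q}$, $EL_n:=\overline{EL_{n-1}\big(b^{EL_{n-1}},\mathrm{Log}_b(EL_{n-1})\big)}$, $EL^{(b)}:=\bigcup_{n\ge0}EL_n$; equivalently the smallest algebraically closed subfield $F\subseteq\mathbb{C}$ with $x\in F\iff b^x\in F$. *)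

From HB Require Import structures.
From mathcomp Require Import all_boot all_order all_algebra.
From mathcomp Require Import all_classical all_reals.
From mathcomp.analysis Require Import sequences exp trigo.
From mathcomp Require Import complex.
Set Implicit Arguments. Unset Strict Implicit. Unset Printing Implicit Defensive.
Import Order.TTheory GRing.Theory Num.Theory.
Local Open Scope ring_scope.
Local Open Scope complex_scope.

Definition cexp (R : realType) (z : R[i]) : R[i] :=
  let: a +i* b := z in (expR a * cos b) +i* (expR a * sin b).

(* b^x := e^(x ln b), for a fixed chosen logarithm lnb of b *)
Definition cpow (R : realType) (lnb x : R[i]) : R[i] := cexp (x * lnb).

Definition is_algebraic (R : realType) (z : R[i]) : Prop :=
  exists p : {poly rat}, p != 0 /\ root (map_poly ratr p) z.

Definition is_subfield (R : realType) (F : R[i] -> Prop) : Prop :=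
  [/\ F 1,
      (forall x y, F x -> F y -> F (x - y)),
      (forall x y, F x -> F y -> F (x * y)) &
      (forall x, F x -> x != 0 -> F x^-1)].

Definition is_alg_closed_in_C (R : realType) (F : R[i] -> Prop) : Prop :=
  forall (p : {poly R[i]}) (z : R[i]),
    p != 0 -> (forall i, F p`_i) -> root p z -> F z.

Definition exp_log_closed (R : realType) (lnb : R[i]) (F : R[i] -> Prop) : Prop :=
  forall x, F x <-> F (cpow lnb x).

(* EL^(b): the smallest algebraically closed subfield F of C with
   x \in F <-> b^x \in F, i.e. the intersection of all such subfields *)
Definition EL (R : realType) (lnb : R[i]) : R[i] -> Prop :=
  fun z => forall F : R[i] -> Prop,
    is_subfield F -> is_alg_closed_in_C F -> exp_log_closed lnb F -> F z.

From HB Require Import structures.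
From mathcomp Require Import all_boot all_order all_algebra.
From mathcomp Require Import all_classical all_reals.
From mathcomp Require Import complex.
Import GRing.Theory Num.Theory.
Local Open Scope ring_scope.

(* An algebraically closed subfield contains every algebraic number, in
   particular b' = b^(ln b' / ln b); closure under x <-> b^x then transfers to
   b' because b'^x = b^(x c) with c = ln b' / ln b a nonzero element of the
   field.  So both EL's are intersections of the same family of fields. *)

Section Subfield.
Variables (R : realType) (F : R[i] -> Prop).
Hypothesis subF : is_subfield F.

Lemma subfield0 : F 0.
Proof. by case: subF => F1 FB _ _; rewrite -(subrr 1); apply: FB. Qed.

Lemma subfieldN x : F x -> F (- x).
Proof. by case: subF => _ FB _ _ Fx; rewrite -sub0r; apply: FB => //; apply: subfield0. Qed.

Lemma subfieldD x y : F x -> F y -> F (x + y).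
Proof.
by case: subF => _ FB _ _ Fx Fy; rewrite -[y]opprK; apply: FB => //; apply: subfieldN.
Qed.

Lemma subfield_nat n : F n%:R.
Proof.
case: subF => F1 _ _ _.
by elim: n => [|n IHn]; [apply: subfield0 | rewrite mulrS; apply: subfieldD].
Qed.

Lemma subfield_int m : F m%:~R.
Proof.
case: m => n; first exact: subfield_nat.
by rewrite NegzE mulrNz; apply/subfieldN/subfield_nat.
Qed.

Lemma subfield_rat q : F (ratr q).
Proof.
case: subF => _ _ FM FV; apply: FM; first exact: subfield_int.
have [->|den_neq0] := eqVneq ((denq q)%:~R : R[i]) 0.
  by rewrite invr0; apply: subfield0.
by apply: FV => //; apply: subfield_int.
Qed.

Lemma algebraic_in_subfield z :
  is_alg_closed_in_C F -> is_algebraic z -> F z.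
Proof.
move=> closedF [p [p_neq0 rootp]]; apply: (closedF _ _ _ _ rootp).
  by rewrite map_poly_eq0.
by move=> i; rewrite coef_map; apply: subfield_rat.
Qed.

Lemma exp_log_closed_scale (lnb c : R[i]) :
  F c -> c != 0 -> exp_log_closed lnb F -> exp_log_closed (c * lnb) F.
Proof.
move=> Fc c_neq0 closedF x; case: subF => _ _ FM FV.
rewrite /cpow mulrA -/(cpow lnb (x * c)) -closedF.
split=> [Fx | Fxc]; first exact: FM.
by rewrite -(mulfK c_neq0 x); apply: FM => //; apply: FV.
Qed.

Lemma exp_log_closed_change_base (lnb lnb' : R[i]) :
  is_alg_closed_in_C F -> is_algebraic (cexp lnb') ->
  lnb != 0 -> lnb' != 0 -> exp_log_closed lnb F -> exp_log_closed lnb' F.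
Proof.
move=> closedF alg_b' lnb_neq0 lnb'_neq0 closedF_b.
have Fc : F (lnb' / lnb).
  by apply/closedF_b; rewrite /cpow divfK //; apply: algebraic_in_subfield.
rewrite -(divfK lnb_neq0 lnb'); apply: exp_log_closed_scale => //.
by rewrite mulf_neq0 ?invr_eq0.
Qed.

End Subfield.

Lemma EL_subset (R : realType) (lnb lnb' : R[i]) :
  is_algebraic (cexp lnb) -> lnb != 0 -> lnb' != 0 ->
  forall z, EL lnb z -> EL lnb' z.
Proof.
move=> alg_b lnb_neq0 lnb'_neq0 z ELz F subF closedF closedF_b'.
apply: ELz => //; exact: exp_log_closed_change_base closedF_b'.
Qed.

Theorem mainTheorem3 (R : realType) (b b' lnb lnb' : R[i]) :
  is_algebraic b -> b != 0 -> b != 1 ->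
  is_algebraic b' -> b' != 0 -> b' != 1 ->
  lnb != 0 -> cexp lnb = b ->
  lnb' != 0 -> cexp lnb' = b' ->
  EL lnb = EL lnb'.
Proof.
move=> alg_b _ _ alg_b' _ _ lnb_neq0 def_b lnb'_neq0 def_b'; subst b b'.
apply: funext => z; apply: propext; split => ELz.
- exact: EL_subset alg_b lnb_neq0 lnb'_neq0 z ELz.
- exact: EL_subset alg_b' lnb'_neq0 lnb_neq0 z ELz.
Qed.
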